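(* Let $\alpha=(\alpha_1,\ldots,\alpha_n)$ be a composition, $\sigma\in S_n$, and $i\in\{1,\ldots,n-1\}$ with $\alpha_i=\alpha_{i+1}$. Let $T\in\mathrm{NAF}(\alpha,\sigma)$ and let $U=\Omega_{0,h}(T)$ for some $h\in\{0,\ldots,\alpha_i\}$, and suppose $U$ is non-attacking. Then $$\mathrm{wt}_{h}(U)\,(1-\rho_h(U))=\mathrm{wt}_{h}(T)\,(1-\rho_h(T)).$$
   Context: Permutations are in one-line notation; $\sigma s_i$ is $\sigma$ with the entries in positions $i,i+1$ exchanged. A composition is a sequence of nonnegative integers. The skyline diagram is $\mathrm{dg}(\alpha)=\{(j,r):1\le j\le n,\ 1\le r\le\alpha_j\}$ ($j$ = column, $r$ = row) and the augmented diagram is $\mathrm{adg}(\alpha)=\mathrm{dg}(\alpha)\cup\{(j,0):1\le j\le n\}$ (row $0$ is the basement). For $u=(j,r)\in\mathrm{dg}(\alpha)$: $\mathrm{south}(u)=(j,r-1)$; $\mathrm{leg}(u)=\alpha_j-r$; the left arm set is $\{(j',r-1)\in\mathrm{adg}(\alpha):j'<j,\ \alpha_{j'}<\alpha_j\}$, the right arm set is $\{(j',r)\in\mathrm{dg}(\alpha):j'>j,\ \alpha_{j'}\le\alpha_j\}$, $\mathrm{Arm}(u)$ is their union and $\mathrm{arm}(u)=|\mathrm{Arm}(u)|$. Two boxes of $\mathrm{adg}(\alpha)$ attack each other if they are in the same row, or in consecutive rows with the box in the higher row strictly to the right of the box in the lower row. A filling of shape $\alpha$ and basement $\tau\in S_n$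 is a map $T:\mathrm{adg}(\alpha)\to\{1,\ldots,n\}$ with $T(j,0)=\tau_j$; $\mathrm{NAF}(\alpha,\tau)$ is the set of non-attacking ones (attacking boxes have distinct entries). For integers $a,b$ let $\chi(a,b)=1$ if $a>b$ and $0$ otherwise, and $\chi(a,b,c)=\chi(a,b)+\chi(b,c)-\chi(a,c)$. For a non-attacking filling $T$: a descent is $u\in\mathrm{dg}(\alpha)$ with $T(u)>T(\mathrm{south}(u))$; a triple is $(u,v,w)$ with $u\in\mathrm{dg}(\alpha)$, $w=\mathrm{south}(u)$, $v\in\mathrm{Arm}(u)$, an inversion triple if $\chi(T(u),T(v),T(w))=1$ and a coinversion triple otherwise. For $r\ge0$, let $\mathrm{maj}_{r+1}(T)=\sum(\mathrm{leg}(u)+1)$ over descents $u$ in row $r+1$, let $\mathrm{coinv}_{r,r+1}(T)$ be the number of coinversion triples $(u,v,w)$ with $u$ in row $r+1$, and $\mathrm{wt}_r(T)=q^{\mathrm{maj}_{r+1}(T)}t^{\mathrm{coinv}_{r,r+1}(T)}\prod_{u\in\mathrm{dg}(\alpha)\text{ in row }r+1,\ T(u)\ne T(\mathrm{south}(u))}\frac{1-t}{1-q^{1+\mathrm{leg}(u)}t^{1+\mathrm{arm}(u)}}$ (empty sums are $0$, empty products $1$). Fix $i$ with $\alpha_i=\alpha_{i+1}$. For a filling $T$ and $0\le r\le\alpha_i$, $\mathrm{swap}_r(T)$ exchanges the entries of boxes $(i,r)$ and $(i+1,r)$, and $\Omega_{0,h}=\mathrm{swap}_h\circ\cdots\circ\mathrm{swap}_0$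 (so $\Omega_{0,h}(T)$ has basement $\sigma s_i$). For a non-attacking filling $T$ (any basement) and $0\le r\le\alpha_i-1$, let $a=T(i,r)$, $b=T(i+1,r)$, $c=T(i,r+1)$, $d=T(i+1,r+1)$, $A=\mathrm{arm}(i+1,r+1)$, $\ell=\mathrm{leg}(i+1,r+1)$, and define $\rho_r(T)\in\mathbb{Q}(q,t)$: if $a,b,c,d$ are distinct, $\rho_r(T)=0$ when $\chi(c,d,a)=\chi(c,d,b)$ and $\rho_r(T)=1$ when $\chi(c,d,a)=\chi(d,c,b)$; if exactly three of them are distinct, then $\rho_r(T)=0$ if $b=c$, $\rho_r(T)=1$ if $b=d$, and $\rho_r(T)=t^{1-\chi(d,a,b)}\frac{1-q^{\ell+1}t^{A+1}}{1-q^{\ell+1}t^{A+2}}$ if $a=c$; if $a=c$ and $b=d$, $\rho_r(T)=1$. By convention $\rho_{\alpha_i}(T)=0$. *)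

From HB Require Import structures.
From mathcomp Require Import all_boot all_order all_algebra.
From mathcomp Require Import fraction.
Set Implicit Arguments. Unset Strict Implicit. Unset Printing Implicit Defensive.
Import Order.TTheory GRing.Theory Num.Theory.

(* Conventions: a composition is alpha : seq nat, n = size alpha; columns
   are 1..n (alpha_j = nth 0 alpha (j-1)); rows r >= 0, row 0 = basement.
   A filling is a function T : nat -> nat -> nat, T j r = entry of box (j,r)
   (values outside adg(alpha) are irrelevant).  Permutations in one-line
   notation are sequences perm_eq to [:: 1; ...; n]. *)

Definition ncol (alpha : seq nat) := size alpha.
Definition acol (alpha : seq nat) (j : nat) := nth 0 alpha j.-1.

Definition in_dg alpha (j r : nat) :=
  [&& 1 <= j, j <= ncol alpha, 1 <= r & r <= acol alpha j].
Definition in_adg alpha (j r : nat) :=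
  [&& 1 <= j, j <= ncol alpha & r <= acol alpha j].

Definition leg alpha (j r : nat) : nat := acol alpha j - r.

Definition left_arm alpha (j r : nat) : seq (nat * nat) :=
  [seq (j', r.-1) | j' <- iota 1 j.-1 &
     in_adg alpha j' r.-1 && (acol alpha j' < acol alpha j)].
Definition right_arm alpha (j r : nat) : seq (nat * nat) :=
  [seq (j', r) | j' <- iota j.+1 (ncol alpha - j) &
     in_dg alpha j' r && (acol alpha j' <= acol alpha j)].
Definition Arm alpha j r := left_arm alpha j r ++ right_arm alpha j r.
Definition arm alpha j r : nat := size (Arm alpha j r).

Definition attack (u v : nat * nat) : bool :=
  [|| (u.2 == v.2) && (u.1 != v.1),
      (v.2 == u.2.+1) && (u.1 < v.1) |
      (u.2 == v.2.+1) && (v.1 < u.1)].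

Definition filling alpha (tau : seq nat) (T : nat -> nat -> nat) : Prop :=
  (forall j, 1 <= j <= ncol alpha -> T j 0 = nth 0 tau j.-1) /\
  (forall j r, in_adg alpha j r -> 1 <= T j r <= ncol alpha).

Definition nonattacking alpha (T : nat -> nat -> nat) : Prop :=
  forall j1 r1 j2 r2, in_adg alpha j1 r1 -> in_adg alpha j2 r2 ->
    attack (j1, r1) (j2, r2) -> T j1 r1 <> T j2 r2.

Definition NAF alpha tau T : Prop := filling alpha tau T /\ nonattacking alpha T.

Definition is_perm (n : nat) (s : seq nat) : bool := perm_eq s (iota 1 n).

(* sigma s_i : exchange positions i, i+1 (1-indexed) *)
Definition perm_si (s : seq nat) (i : nat) : seq nat :=
  [seq (if k == i then nth 0 s i else if k == i.+1 then nth 0 s i.-1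
        else nth 0 s k.-1) | k <- iota 1 (size s)].

Definition swap_row (i r : nat) (T : nat -> nat -> nat) : nat -> nat -> nat :=
  fun j r' => if r' == r then
                (if j == i then T i.+1 r else if j == i.+1 then T i r else T j r')
              else T j r'.
Fixpoint Omega (i h : nat) (T : nat -> nat -> nat) : nat -> nat -> nat :=
  match h with
  | 0 => swap_row i 0 T
  | h'.+1 => swap_row i h'.+1 (Omega i h' T)
  end.

Definition chi2 (a b : nat) : int := (a > b)%N%:Z.
Definition chi3 (a b c : nat) : int := (chi2 a b + chi2 b c - chi2 a c)%R.

Definition QqtR := {poly {poly rat}}.
Definition Qqt := {fraction QqtR}.
Definition qq : Qqt := @FracField.tofrac QqtR (('X : {poly rat})%:P).
Definition tt : Qqt := @FracField.tofrac QqtR 'X.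

Local Open Scope ring_scope.

(* boxes of dg(alpha) in row r+1 are (j, r+1), 1 <= j <= n *)
Definition row_cols alpha (r : nat) : seq nat :=
  [seq j <- iota 1 (ncol alpha) | in_dg alpha j r.+1].

Definition maj_row alpha (T : nat -> nat -> nat) (r : nat) : nat :=
  \sum_(j <- row_cols alpha r | (T j r.+1 > T j r)%N) (leg alpha j r.+1).+1.

Definition coinv_row alpha (T : nat -> nat -> nat) (r : nat) : nat :=
  \sum_(j <- row_cols alpha r)
     count (fun v : nat * nat => chi3 (T j r.+1) (T v.1 v.2) (T j r) != 1)
           (Arm alpha j r.+1).

Definition wt alpha (T : nat -> nat -> nat) (r : nat) : Qqt :=
  qq ^+ maj_row alpha T r * tt ^+ coinv_row alpha T r *
  \prod_(j <- row_cols alpha r | T j r.+1 != T j r)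
     ((1 - tt) / (1 - qq ^+ (1 + leg alpha j r.+1) * tt ^+ (1 + arm alpha j r.+1))).

Definition rho alpha (i : nat) (T : nat -> nat -> nat) (r : nat) : Qqt :=
  if (r >= acol alpha i)%N then 0 else
  let a := T i r in let b := T i.+1 r in
  let c := T i r.+1 in let d := T i.+1 r.+1 in
  let A := arm alpha i.+1 r.+1 in let l := leg alpha i.+1 r.+1 in
  if (a == c) && (b == d) then 1
  else if b == c then 0
  else if b == d then 1
  else if a == c then
    tt ^ (1 - chi3 d a b) *
    ((1 - qq ^+ l.+1 * tt ^+ A.+1) / (1 - qq ^+ l.+1 * tt ^+ A.+2))
  else (* a, b, c, d distinct *)
    if chi3 c d a == chi3 c d b then 0 else 1.

From mathcomp Require Import all_boot all_order all_algebra.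
From mathcomp Require Import fraction.
From mathcomp Require Import zify ring.

Set Implicit Arguments.
Unset Strict Implicit.
Unset Printing Implicit Defensive.
Import GRing.Theory.
Local Open Scope ring_scope.

(* wt_h is a product over the boxes u = (j, h+1) of row h+1 of a weight depending only on
   the entry of u, the entry below u and the multiset of entries of Arm(u).  Omega_{0,h}
   exchanges columns i and i+1 in rows <= h only, so for j <> i, i+1 it fixes both entries
   and permutes the arm entries.  If h = alpha_i the columns i, i+1 do not reach row h+1 and
   rho vanishes.  Otherwise Arm(i, h+1) is Arm(i+1, h+1) plus the box (i+1, h+1), and the
   claim is an identity between the weights of two boxes with upper entries c, d whose lower
   entries a, b get exchanged.  The exchange multiplies the q- and t-monomials by
   (q^(l+1) t^(A+1))^K with K = chi(c,d,a) - chi(c,d,b), since every arm entry contributes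
   the same amount; a case analysis on rho then reduces everything to two rational
   identities in q and t. *)

Lemma chi3_01 x y z : (chi3 x y z == 0) || (chi3 x y z == 1).
Proof. rewrite /chi3 /chi2; lia. Qed.

Lemma chi3_xyx x y : y != x -> chi3 x y x = 1.
Proof. rewrite /chi3 /chi2 => ?; lia. Qed.

Definition cross (x x' z z' : nat) : int := chi2 x z + chi2 x' z' - chi2 x z' - chi2 x' z.

Lemma cross_chi3 a b c d : cross c d b a = chi3 c d a - chi3 c d b.
Proof. rewrite /cross /chi3; ring. Qed.

Definition coinv (x z : nat) (ys : seq nat) : nat := count (fun y => chi3 x y z != 1) ys.

Lemma chi3_neq1E x y z : ((chi3 x y z != 1) : nat)%:Z = 1 - chi3 x y z.
Proof. by case/orP: (chi3_01 x y z) => /eqP ->. Qed.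

Lemma chi3_cross x x' y z z' :
  (1 - chi3 x y z) + (1 - chi3 x' y z') = (1 - chi3 x y z') + (1 - chi3 x' y z) + cross x x' z z'.
Proof. rewrite /chi3 /cross; ring. Qed.

(* The terms of chi3 involving the arm entry y cancel, so each entry contributes [cross]. *)
Lemma coinv_cross x x' z z' ys :
  (coinv x z ys + coinv x' z' ys)%:Z =
  (coinv x z' ys + coinv x' z ys)%:Z + (size ys)%:Z * cross x x' z z'.
Proof.
elim: ys => [|y ys IH]; first by rewrite mul0r addr0.
rewrite /coinv /= -!/(coinv _ _ ys).
move: IH (chi3_cross x x' y z z'); rewrite -!chi3_neq1E !PoszD; lia.
Qed.

Lemma coinv_diag x ys : x \notin ys -> coinv x x ys = 0%N.
Proof.
move=> xys; apply/eqP; rewrite -leqn0 leqNgt -has_count; apply/hasPn => y yys.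
by rewrite chi3_xyx ?negbK //; apply: contraNneq xys => <-.
Qed.

Section LocalIdentity.

Variables (F : fieldType) (q t : F).
Hypothesis den_neq0 : forall n m, (0 < m)%N -> 1 - q ^+ n * t ^+ m != 0.

Definition box_mono (l x z : nat) (ys : seq nat) : F :=
  q ^+ ((z < x)%N * l.+1) * t ^+ coinv x z ys.

Definition box_factor (l m : nat) : F := (1 - t) / (1 - q ^+ (1 + l) * t ^+ (1 + m)).

Definition box_wt (l m x z : nat) (ys : seq nat) : F :=
  box_mono l x z ys * (if x != z then box_factor l m else 1).

Definition rho_factor (l A : nat) : F :=
  (1 - q ^+ l.+1 * t ^+ A.+1) / (1 - q ^+ l.+1 * t ^+ A.+2).

Definition rho_box (l A a b c d : nat) : F :=
  if (a == c) && (b == d) then 1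
  else if b == c then 0
  else if b == d then 1
  else if a == c then t ^ (1 - chi3 d a b) * rho_factor l A
  else if chi3 c d a == chi3 c d b then 0 else 1.

Lemma box_wt_perm l m x z ys ys' :
  perm_eq ys ys' -> box_wt l m x z ys = box_wt l m x z ys'.
Proof. by move/permP=> eq_count; rewrite /box_wt /box_mono /coinv eq_count. Qed.

Lemma box_wt_diag l m x ys : x \notin ys -> box_wt l m x x ys = 1.
Proof. by move=> xys; rewrite /box_wt /box_mono coinv_diag // ltnn eqxx !mulr1. Qed.

Lemma box_mono_cross l a b c d ys k : cross c d b a = k%:Z ->
  box_mono l c b (d :: ys) * box_mono l d a ys =
  (q ^+ l.+1 * t ^+ (size ys).+1) ^+ k * (box_mono l c a (d :: ys) * box_mono l d b ys).
Proof.
move=> cross_k.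
have maj : ((b < c) * l.+1 + (a < d) * l.+1 =
             l.+1 * k + ((a < c) * l.+1 + (b < d) * l.+1))%N.
  rewrite -!mulnDl [(l.+1 * k)%N]mulnC -mulnDl; congr (_ * _)%N.
  by move: cross_k; rewrite /cross /chi2; lia.
have coinv_d x : coinv d x (d :: ys) = (coinv d x ys).+1.
  by rewrite /coinv /= /chi3 /chi2 ltnn add0r subrr.
have co : (coinv c b (d :: ys) + coinv d a ys =
            (size ys).+1 * k + (coinv c a (d :: ys) + coinv d b ys))%N.
  have := coinv_cross c d b a (d :: ys); rewrite cross_k !coinv_d /=; lia.
rewrite /box_mono mulrACA -!exprD maj co exprMn -!exprM.
rewrite (exprD q (l.+1 * k)) (exprD t (_ * k)).
by rewrite (exprD q ((a < c) * l.+1)) (exprD t (coinv _ _ _)); ring.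
Qed.

Lemma box_factor_rho l A k : (k <= 1)%N ->
  (q ^+ l.+1 * t ^+ A.+1) ^+ k * box_factor l A.+1 = 1 - t ^ (1 - k%:Z) * rho_factor l A.
Proof.
have := den_neq0 l.+1 (ltn0Sn A.+1).
rewrite /box_factor /rho_factor !add1n (exprS t A.+1).
set Q := q ^+ l.+1; set u := t ^+ A.+1 => den.
by case: k => [|[|//]] _; [rewrite subr0 expr1z | rewrite subrr expr0z]; field.
Qed.

Lemma box_wt_rho_diag l a b d ys : a != b -> a != d -> b != d -> a \notin ys ->
  box_wt l (size ys).+1 a b (d :: ys) * box_wt l (size ys) d a ys =
  box_wt l (size ys) d b ys * (1 - t ^ (1 - chi3 d a b) * rho_factor l (size ys)).
Proof.
move=> ab ad bd ays.
have [k chi3_k k_le1] : exists2 k, chi3 d a b = k%:Z & (k <= 1)%N.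
  by case/orP: (chi3_01 d a b) => /eqP ->; [exists 0%N | exists 1%N].
have cross_k : cross a d b a = k%:Z by rewrite -chi3_k /cross /chi3 /chi2; lia.
have ads : a \notin d :: ys by rewrite inE negb_or ad.
rewrite chi3_k -box_factor_rho // /box_wt ab eq_sym ad eq_sym bd.
rewrite mulrACA (box_mono_cross _ _ cross_k).
rewrite /box_mono coinv_diag // ltnn; ring.
Qed.

Lemma box_wt_rho l a b c d ys :
  a != b -> c != d -> a != d -> b != d -> c \notin ys ->
  box_wt l (size ys).+1 c b (d :: ys) * box_wt l (size ys) d a ys *
    (1 - rho_box l (size ys) b a c d) =
  box_wt l (size ys).+1 c a (d :: ys) * box_wt l (size ys) d b ys *
    (1 - rho_box l (size ys) a b c d).
Proof.
move=> ab cd ad bd cys.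
have cdys : c \notin d :: ys by rewrite inE negb_or cd.
have [ac|ac] := eqVneq a c.
  subst c; rewrite /rho_box eqxx (eq_sym b) (negbTE ab) (negbTE bd) /=.
  by rewrite subr0 mulr1 box_wt_diag // mul1r box_wt_rho_diag.
have [bc|bc] := eqVneq b c.
  subst c; rewrite /rho_box eqxx (negbTE ab) (negbTE ad) /=.
  by rewrite subr0 mulr1 box_wt_diag // mul1r box_wt_rho_diag // eq_sym.
rewrite /rho_box (negbTE ac) (negbTE bc) (negbTE ad) (negbTE bd) !andbF /= eq_sym.
have [chi3_eq|] := eqVneq (chi3 c d a) (chi3 c d b); last by rewrite subrr !mulr0.
have cross0 : cross c d b a = 0%N by rewrite cross_chi3 chi3_eq subrr.
rewrite /box_wt (eq_sym c b) bc (eq_sym c a) ac (eq_sym d a) ad (eq_sym d b) bd.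
rewrite !subr0 !mulr1.
by rewrite mulrACA (box_mono_cross _ _ cross0) expr0 mul1r mulrACA.
Qed.

End LocalIdentity.

Lemma qt_den_neq0 n m : (0 < m)%N -> 1 - qq ^+ n * tt ^+ m != 0.
Proof.
move=> m_gt0; rewrite /qq /tt -!tofracXn -tofracM -tofrac1 -tofracB tofrac_eq0.
apply/eqP => /(congr1 (fun p : QqtR => p`_0)).
rewrite coefB coef1 coefMXn m_gt0 subr0 coef0 => /eqP; by rewrite oner_eq0.
Qed.

Definition col_wt alpha (T : nat -> nat -> nat) r j : Qqt :=
  box_wt qq tt (leg alpha j r.+1) (arm alpha j r.+1) (T j r.+1) (T j r)
    [seq T v.1 v.2 | v <- Arm alpha j r.+1].

Lemma wt_prod alpha T r : wt alpha T r = \prod_(j <- row_cols alpha r) col_wt alpha T r j.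
Proof.
rewrite /wt /maj_row /coinv_row /col_wt /box_wt /box_mono.
rewrite [RHS]big_split [in RHS]big_split /=.
rewrite (big_morph _ (exprD qq) (expr0 qq)) (big_morph _ (exprD tt) (expr0 tt)).
rewrite big_mkcond [X in _ * X = _]big_mkcond /=.
congr (_ * _ * _); apply: eq_bigr => j _; first by case: (_ < _)%N; rewrite ?mul1n ?mul0n.
by rewrite /coinv count_map.
Qed.

Lemma rho_box_eq alpha i S h : (h < acol alpha i)%N -> rho alpha i S h =
  rho_box qq tt (leg alpha i.+1 h.+1) (arm alpha i.+1 h.+1)
    (S i h) (S i.+1 h) (S i h.+1) (S i.+1 h.+1).
Proof. by move=> h_lt; rewrite /rho leqNgt h_lt. Qed.

Lemma rho_above alpha i S h : (acol alpha i <= h)%N -> rho alpha i S h = 0.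
Proof. by move=> h_ge; rewrite /rho h_ge. Qed.

Definition swap_col (i j : nat) : nat :=
  if j == i then i.+1 else if j == i.+1 then i else j.

Lemma swap_col_id i j : j != i -> j != i.+1 -> swap_col i j = j.
Proof. by rewrite /swap_col => /negbTE -> /negbTE ->. Qed.

Lemma swap_colK i : involutive (swap_col i).
Proof.
move=> j; rewrite /swap_col.
case: (j =P i) => [->|/eqP ji] /=; first by rewrite (gtn_eqF (ltnSn i)) eqxx.
case: (j =P i.+1) => [->|/eqP ji1] /=; first by rewrite eqxx.
by rewrite (negbTE ji) (negbTE ji1).
Qed.

Lemma OmegaE i h T j r :
  Omega i h T j r = T (if (r <= h)%N then swap_col i j else j) r.
Proof.
elim: h j r => [|h IH] j r /=; rewrite /swap_row /swap_col.
  by case: r => [|r] //=; case: eqP => // _; case: eqP.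
case: (r =P h.+1) => [->|/eqP r_neq].
  by rewrite leqnn !IH ltnn; case: eqP => // _; case: eqP.
have -> : (r <= h.+1)%N = (r <= h)%N by rewrite leq_eqVlt (negbTE r_neq).
exact: IH.
Qed.

Lemma swap_col_l i : swap_col i i = i.+1.
Proof. by rewrite /swap_col eqxx. Qed.

Lemma swap_col_r i : swap_col i i.+1 = i.
Proof. by rewrite /swap_col (gtn_eqF (ltnSn i)) eqxx. Qed.

Definition swap_box i h (v : nat * nat) : nat * nat :=
  (if (v.2 <= h)%N then swap_col i v.1 else v.1, v.2).

Lemma swap_boxK i h : involutive (swap_box i h).
Proof. by case=> j r; rewrite /swap_box /=; case: (r <= h)%N; rewrite ?swap_colK. Qed.

Lemma uniq_Arm alpha j r : (0 < r)%N -> uniq (Arm alpha j r).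
Proof.
move=> r_gt0; rewrite /Arm cat_uniq !map_inj_uniq ?filter_uniq ?iota_uniq //;
  try by move=> x y [].
rewrite andbT; apply/hasPn => _ /mapP [x _ ->]; apply/mapP => [[y _ [_]]].
lia.
Qed.

Lemma mem_Arm alpha j r v : v \in Arm alpha j r ->
  in_adg alpha v.1 v.2 /\
  (v.2 = r.-1 /\ (v.1 < j)%N /\ (acol alpha v.1 < acol alpha j)%N \/ v.2 = r /\ (j < v.1)%N).
Proof.
rewrite mem_cat => /orP [] /mapP [x];
  rewrite mem_filter mem_iota => /andP [/andP [x_adg x_acol] x_range] -> /=.
  by split=> //; left; do 2!split=> //; lia.
by split; [move: x_adg; rewrite /in_dg /in_adg; lia | right; split=> //; lia].
Qed.

Section SwapColumns.

Variables (alpha : seq nat) (i h : nat).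
Hypotheses (i_ge1 : (1 <= i)%N) (i_lt : (i < ncol alpha)%N).
Hypothesis acol_i : acol alpha i = acol alpha i.+1.

Lemma acol_swap_col j : acol alpha (swap_col i j) = acol alpha j.
Proof. by rewrite /swap_col; case: eqP => [->|_]; last case: eqP => [->|]. Qed.

Lemma swap_box_Arm j : j != i -> j != i.+1 ->
  {in Arm alpha j h.+1, forall v, swap_box i h v \in Arm alpha j h.+1}.
Proof.
move=> /eqP ji /eqP ji1 v; rewrite !mem_cat => /orP [] /mapP [x] x_in ->.
  rewrite /swap_box /= leqnn; apply/orP; left; apply/mapP; exists (swap_col i x) => //.
  move: x_in; rewrite !mem_filter !mem_iota /in_adg !acol_swap_col /swap_col.
  by case: (x =P i) => xi; case: (x =P i.+1) => xi1; lia.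
by rewrite /swap_box /= ltnn; apply/orP; right; apply/mapP; exists x.
Qed.

Lemma perm_Arm_swap j : j != i -> j != i.+1 ->
  perm_eq [seq swap_box i h v | v <- Arm alpha j h.+1] (Arm alpha j h.+1).
Proof.
move=> ji ji1; apply: uniq_perm; rewrite ?map_inj_uniq ?uniq_Arm //.
  exact: inv_inj (swap_boxK i h).
move=> v; apply/mapP/idP => [[w w_in ->]|v_in]; first exact: swap_box_Arm.
by exists (swap_box i h v); rewrite ?swap_boxK ?swap_box_Arm.
Qed.

Lemma col_wt_Omega_id T j : j != i -> j != i.+1 ->
  col_wt alpha (Omega i h T) h j = col_wt alpha T h j.
Proof.
move=> ji ji1; rewrite /col_wt !OmegaE leqnn ltnn swap_col_id //; apply: box_wt_perm.
have -> : [seq Omega i h T v.1 v.2 | v <- Arm alpha j h.+1] =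
          [seq T v.1 v.2 | v <- [seq swap_box i h v | v <- Arm alpha j h.+1]].
  by rewrite -map_comp; apply: eq_map => v; rewrite OmegaE.
exact/perm_map/perm_Arm_swap.
Qed.

Lemma wt_Omega_above T : (acol alpha i <= h)%N -> wt alpha (Omega i h T) h = wt alpha T h.
Proof.
move=> h_ge; rewrite !wt_prod; apply: eq_big_seq => j.
rewrite mem_filter /in_dg => /andP [j_dg _].
by apply: col_wt_Omega_id; apply/eqP => ji; move: j_dg; rewrite ji -?acol_i; lia.
Qed.

Lemma left_arm_succ r : left_arm alpha i.+1 r = left_arm alpha i r.
Proof.
have iota_i : iota 1 i = iota 1 i.-1 ++ [:: i].
  by rewrite -[in LHS](prednK i_ge1) -(addn1 i.-1) iotaD add1n prednK.
by rewrite /left_arm /= iota_i filter_cat /= -acol_i ltnn andbF cats0.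
Qed.

Lemma right_arm_pred : (h < acol alpha i)%N ->
  right_arm alpha i h.+1 = (i.+1, h.+1) :: right_arm alpha i.+1 h.+1.
Proof.
move=> h_lt; rewrite /right_arm -acol_i.
have -> : (ncol alpha - i = (ncol alpha - i.+1).+1)%N by lia.
by rewrite /= ifT // -acol_i leqnn andbT /in_dg -acol_i; lia.
Qed.

Lemma perm_Arm_pair : (h < acol alpha i)%N ->
  perm_eq (Arm alpha i h.+1) ((i.+1, h.+1) :: Arm alpha i.+1 h.+1).
Proof.
move=> h_lt; rewrite /Arm left_arm_succ right_arm_pred //.
exact: permEl (perm_catCA _ [:: _] _).
Qed.

Lemma mem_Arm_succ v : v \in Arm alpha i.+1 h.+1 ->
  in_adg alpha v.1 v.2 /\ (v.2 = h /\ (v.1 < i)%N \/ v.2 = h.+1 /\ (i.+1 < v.1)%N).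
Proof.
case/mem_Arm => v_adg [[v2 [v1_lt acol_lt]] | v_right]; split=> //; last by right.
left; split=> //; rewrite -acol_i in acol_lt.
have : v.1 != i by apply: contraTneq acol_lt => ->; rewrite ltnn.
by move: v1_lt; lia.
Qed.

Lemma col_wt_pair_rho T : (h < acol alpha i)%N ->
  nonattacking alpha T -> nonattacking alpha (Omega i h T) ->
  col_wt alpha (Omega i h T) h i * col_wt alpha (Omega i h T) h i.+1 *
    (1 - rho alpha i (Omega i h T) h) =
  col_wt alpha T h i * col_wt alpha T h i.+1 * (1 - rho alpha i T h).
Proof.
move=> h_lt NT NU; set U := Omega i h T.
set ys := [seq T v.1 v.2 | v <- Arm alpha i.+1 h.+1].
have U_Arm : [seq U v.1 v.2 | v <- Arm alpha i.+1 h.+1] = ys.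
  apply/eq_in_map => v /mem_Arm_succ [_ [[-> v1_lt] | [-> _]]]; rewrite /U OmegaE ?ltnn //.
  by rewrite leqnn swap_col_id ?(ltn_eqF v1_lt) ?(ltn_eqF (ltn_trans v1_lt (ltnSn i))).
have perm_i (S : nat -> nat -> nat) : perm_eq [seq S v.1 v.2 | v <- Arm alpha i h.+1]
    (S i.+1 h.+1 :: [seq S v.1 v.2 | v <- Arm alpha i.+1 h.+1]).
  exact: perm_map (perm_Arm_pair h_lt).
have arm_i : arm alpha i h.+1 = (size ys).+1.
  by rewrite /arm (perm_size (perm_Arm_pair h_lt)) /= size_map.
have arm_i1 : arm alpha i.+1 h.+1 = size ys by rewrite size_map.
have leg_i : leg alpha i h.+1 = leg alpha i.+1 h.+1 by rewrite /leg acol_i.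
rewrite /col_wt !(box_wt_perm qq tt _ _ _ _ (perm_i _)) U_Arm !rho_box_eq //.
rewrite leg_i arm_i arm_i1 /U !OmegaE leqnn ltnn swap_col_l swap_col_r -/ys.
have adg_i r : (r <= h.+1)%N -> in_adg alpha i r by rewrite /in_adg; lia.
have adg_i1 r : (r <= h.+1)%N -> in_adg alpha i.+1 r by rewrite /in_adg -acol_i; lia.
apply: (box_wt_rho qt_den_neq0).
- by apply/eqP/NT; rewrite ?adg_i ?adg_i1 // /attack /=; lia.
- by apply/eqP/NT; rewrite ?adg_i ?adg_i1 // /attack /=; lia.
- by apply/eqP/NT; rewrite ?adg_i ?adg_i1 // /attack /=; lia.
- (* the only use of the hypothesis that Omega_{0,h} T is non-attacking *)
  have := NU i h i.+1 h.+1; rewrite !OmegaE leqnn ltnn swap_col_l.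
  by move=> NU_b_d; apply/eqP/NU_b_d; rewrite ?adg_i ?adg_i1 // /attack /=; lia.
apply/mapP => -[[x r] /mem_Arm_succ /= [x_adg x_pos]].
by apply: NT; rewrite ?adg_i // /attack /=; lia.
Qed.

Let rest := rem i.+1 (rem i (row_cols alpha h)).

Lemma wt_rem_pair S : (h < acol alpha i)%N ->
  wt alpha S h =
  col_wt alpha S h i * col_wt alpha S h i.+1 * \prod_(j <- rest) col_wt alpha S h j.
Proof.
move=> h_lt.
have row_uniq : uniq (row_cols alpha h) by rewrite filter_uniq ?iota_uniq.
have i_row : i \in row_cols alpha h by rewrite mem_filter mem_iota /in_dg; lia.
have i1_row : i.+1 \in rem i (row_cols alpha h).
  by rewrite mem_rem_uniq // inE (gtn_eqF (ltnSn i)) mem_filter mem_iota /in_dg -acol_i; lia.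
by rewrite wt_prod (big_rem _ i_row) (big_rem _ i1_row) /= mulrA.
Qed.

Lemma col_wt_Omega_rest T :
  {in rest, forall j, col_wt alpha (Omega i h T) h j = col_wt alpha T h j}.
Proof.
have row_uniq : uniq (row_cols alpha h) by rewrite filter_uniq ?iota_uniq.
move=> j; rewrite mem_rem_uniq ?rem_uniq // inE mem_rem_uniq // inE.
by case/and3P=> ji1 ji _; apply: col_wt_Omega_id.
Qed.

End SwapColumns.

Theorem lemma3p11 (alpha sigma : seq nat) (i h : nat) (T : nat -> nat -> nat) :
  is_perm (ncol alpha) sigma ->
  (1 <= i)%N -> (i < ncol alpha)%N ->
  acol alpha i = acol alpha i.+1 ->
  NAF alpha sigma T ->
  (h <= acol alpha i)%N ->
  NAF alpha (perm_si sigma i) (Omega i h T) ->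
  wt alpha (Omega i h T) h * (1 - rho alpha i (Omega i h T) h)
  = wt alpha T h * (1 - rho alpha i T h).
Proof.
move=> _ i_ge1 i_lt acol_i [_ NT] _ [_ NU].
have [h_lt|h_ge] := ltnP h (acol alpha i); last first.
  by rewrite !rho_above // wt_Omega_above.
rewrite !(wt_rem_pair i_ge1 i_lt acol_i _ h_lt).
rewrite (eq_big_seq _ (col_wt_Omega_rest i_ge1 i_lt acol_i T)).
by rewrite mulrAC [RHS]mulrAC col_wt_pair_rho.
Qed.
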